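(* Let $T$ be a countable Dedekind domain such that $T/J$ is finite for every nonzero ideal $J\subset T$, let $a\in T$ be nonzero and not a unit, and let $R=T/aT$. Let $N$ be a finite $R$-module, $\delta>0$ a real number, $\epsilon_R>0$ a real number, and $n$ a positive integer; let $V=R^n$. Let $X$ be an $\epsilon_R$-balanced random vector valued in $V$, let $F\in\mathrm{Hom}_R(V,N)$ be a code of distance $\delta n$, and let $A\in N$. Then \[\left|\mathbb{P}(FX=A)-|N|^{-1}\right|\leq\exp(-\epsilon_R\delta n/|R|^2).\]
   Context: A random variable $y$ valued in $R$ is $\epsilon_R$-balanced if for every ideal $I$ of $R$ such that $R/I$ is an elementary abelian group (i.e. $R/I\simeq(\mathbb{Z}/p\mathbb{Z})^m$ as abelian groups for some prime $p$ and $m>0$), the image of $y$ in $R/I$ lies in any given proper affine $\mathbb{F}_p$-subspace of $R/I$ with probability at most $1-\epsilon_R$. A random vector is $\epsilon_R$-balanced if its entries are independent and $\epsilon_R$-balanced. Let $v_1,\dots,v_n$ be the standard basis of $V=R^n$; for $\sigma\subset[n]=\{1,\dots,n\}$, $V_\sigma$ is the submodule generated by the $v_i$ with $i\notin\sigma$. $F\in\mathrm{Hom}_R(V,N)$ is a code of distance $w$ if $F(V_\sigma)=N$ for every $\sigma\subset[n]$ with $|\sigma|<w$. *)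

From HB Require Import structures.
From mathcomp Require Import all_boot all_order all_algebra.
From mathcomp Require Import reals sequences exp.
Set Implicit Arguments. Unset Strict Implicit. Unset Printing Implicit Defensive.
Import Order.TTheory GRing.Theory Num.Theory.
Local Open Scope ring_scope.

Definition is_ideal (T : comNzRingType) (I : T -> Prop) : Prop :=
  [/\ I 0, (forall x y, I x -> I y -> I (x - y)) & (forall r x, I x -> I (r * x))].

Definition is_prime_ideal (T : comNzRingType) (I : T -> Prop) : Prop :=
  [/\ is_ideal I, ~ I 1 & (forall x y, I (x * y) -> I x \/ I y)].

Definition is_maximal_ideal (T : comNzRingType) (I : T -> Prop) : Prop :=
  [/\ is_ideal I, ~ I 1 &
      (forall J : T -> Prop, is_ideal J -> (forall x, I x -> J x) ->
         (forall x, J x -> I x) \/ J 1)].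

Definition noetherian (T : comNzRingType) : Prop :=
  forall I : nat -> T -> Prop,
    (forall k, is_ideal (I k)) ->
    (forall k x, I k x -> I k.+1 x) ->
    exists m, forall k x, (m <= k)%N -> I k x -> I m x.

(* Integrally closed: if x/y (y != 0) is a root of a monic polynomial over T,
   i.e.  sum_i p_i x^i y^(d-i) = 0 with p monic of degree d, then y | x. *)
Definition integrally_closed (T : idomainType) : Prop :=
  forall (x y : T) (p : {poly T}), y != 0 -> p \is monic ->
    \sum_(i < size p) p`_i * x ^+ i * y ^+ ((size p).-1 - i) = 0 ->
    exists z, x = y * z.

Definition dedekind_domain (T : idomainType) : Prop :=
  [/\ noetherian T, integrally_closed T &
      forall P : T -> Prop, is_prime_ideal P -> (exists x, P x /\ x != 0) ->
        is_maximal_ideal P].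

Definition finite_quotient (T : comNzRingType) (J : T -> Prop) : Prop :=
  exists s : seq T, forall x, exists2 y, y \in s & J (x - y).

Definition set_ideal (R : finComNzRingType) (I : {set R}) : bool :=
  [&& 0 \in I, [forall x in I, forall y in I, x - y \in I] &
      [forall r, forall x in I, r * x \in I]].

Definition set_subgroup (R : finComNzRingType) (W : {set R}) : bool :=
  (0 \in W) && [forall x in W, forall y in W, x - y \in W].

Definition is_distr (K : realType) (S : finType) (mu : S -> K) : Prop :=
  (forall s, 0 <= mu s) /\ \sum_s mu s = 1.

(* mu is eps-balanced: for every ideal I with R/I an elementary abelian
   p-group (p prime, I proper, p annihilates R/I), and every proper affine
   F_p-subspace of R/I -- whose preimage in R is c + W with W an additive
   subgroup of R, I <= W, W != R -- the mass of that preimage is <= 1 - eps. *)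
Definition balanced (K : realType) (R : finComNzRingType) (eps : K)
    (mu : R -> K) : Prop :=
  forall (I : {set R}) (p : nat),
    set_ideal I -> prime p -> (p%:R : R) \in I -> I != [set: R] ->
    forall (W : {set R}) (c : R),
      set_subgroup W -> I \subset W -> W != [set: R] ->
      \sum_(r | r - c \in W) mu r <= 1 - eps.

(* V_sigma : vectors of R^n supported outside sigma. F is a code of distance w
   if F(V_sigma) = N whenever |sigma| < w. *)
Definition is_code (K : realType) (R : finComNzRingType) (N : finLmodType R)
    (n : nat) (F : {linear 'rV[R]_n -> N}) (w : K) : Prop :=
  forall sigma : {set 'I_n}, (#|sigma|%:R < w) ->
    forall y : N, exists x : 'rV[R]_n,
      (forall i, i \in sigma -> x ord0 i = 0) /\ F x = y.

(* P(F X = A) for X with independent entries X_i ~ mu i. *)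
Definition prob_code (K : realType) (R : finComNzRingType) (N : finLmodType R)
    (n : nat) (F : {linear 'rV[R]_n -> N}) (mu : 'I_n -> R -> K) (A : N) : K :=
  \sum_(x : 'rV[R]_n | F x == A) \prod_(i < n) mu i (x ord0 i).

(* Fourier analysis on N. Averaging over a family of characters chi of N turns
   P(F X = A) - 1/|N| into an average of chi(-A) E[chi(F X)] over nontrivial chi.
   For such chi, E[chi(F X)] is the product over i of E[psi_i(X_i)], where
   psi_i(r) = chi(F(r e_i)) is a character of (R, +); since F is a code of distance
   delta n, at least delta n of the psi_i are nontrivial.  Each of these satisfies
   |E[psi_i(X_i)]| <= 1 - eps/|R|^2: a power of psi_i has prime order p, and its
   kernel contains an ideal I with p in I, so every fibre of psi_i lies in a proper
   affine subspace modulo I and has mass at most 1 - eps; and distinct values of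
   psi_i are |R|-th roots of unity, at squared distance at least 8/|R|^2.
   Characters separating the points of N are obtained by extending characters of
   subgroups one cyclic factor at a time. *)

From HB Require Import structures.
From mathcomp Require Import all_boot all_order all_algebra all_fingroup cyclic.
From mathcomp Require Import reals sequences exp complex.
From mathcomp Require Import ring lra zify.
Set Implicit Arguments. Unset Strict Implicit. Unset Printing Implicit Defensive.
Import Order.TTheory GRing.Theory Num.Theory FinRing.Theory.
Local Open Scope ring_scope.

Section RootsOfUnity.
Variable C : numClosedFieldType.
Implicit Types z w : C.

Lemma norm_root1 z k : (0 < k)%N -> z ^+ k = 1 -> `|z| = 1.
Proof. by move=> k_gt0 zk; apply/eqP; rewrite -(pexpr_eq1 k_gt0) // -normrX zk normr1. Qed.

Lemma sum_expr_root1 z m : z ^+ m = 1 -> z != 1 -> \sum_(i < m) z ^+ i = 0.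
Proof.
move=> zm z1; apply: (mulfI (_ : z - 1 != 0)); first by rewrite subr_eq0.
by rewrite -subrX1 zm subrr mulr0.
Qed.

Lemma exists_root1_neq1 d : (1 < d)%N -> exists2 t : C, t ^+ d = 1 & t != 1.
Proof.
move=> d_gt1; pose p : {poly C} := \poly_(i < d) 1.
have [t /rootP pt] : exists t, root p t.
  by apply/closed_rootP; rewrite size_poly_eq ?oner_eq0 ?gtn_eqF.
have sum_t : \sum_(i < d) t ^+ i = 0.
  by rewrite -[RHS]pt horner_poly; apply: eq_bigr => i _; rewrite mul1r.
exists t; first by apply/eqP; rewrite -subr_eq0 subrX1 sum_t mulr0.
apply/eqP => t1; move: sum_t; rewrite t1; under eq_bigr do rewrite expr1n.
by rewrite sumr_const card_ord => /eqP; rewrite pnatr_eq0 gtn_eqF // ltnW.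
Qed.

Lemma sqr_norm_subr1 w : `|w| = 1 -> `|1 - w| ^+ 2 = 2 - (w + w^*).
Proof.
move=> w1; have ww : w * w^* = 1 by rewrite -normCK w1 expr1n.
rewrite normCK rmorphB rmorph1.
transitivity (1 - w - w^* + w * w^*); first by ring.
by rewrite ww; ring.
Qed.

Lemma norm_subr1_expr_le z j : `|z| = 1 -> `|1 - z ^+ j| <= j%:R * `|1 - z|.
Proof.
move=> z1; rewrite -opprB subrX1 normrN normrM distrC mulrC ler_wpM2r //.
apply: le_trans (ler_norm_sum _ _ _) _.
by rewrite (eq_bigr (fun=> 1)) ?sumr_const ?card_ord // => i _; rewrite normrX z1 expr1n.
Qed.

Lemma root1_far_power z k : (0 < k)%N -> z ^+ k = 1 -> z != 1 ->
  exists2 j, (2 * j <= k)%N & 2 <= `|1 - z ^+ j| ^+ 2.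
Proof.
move=> k_gt0 zk z1; have zX_norm j : `|z ^+ j| = 1.
  by rewrite normrX (norm_root1 k_gt0 zk) expr1n.
have sum_dist : \sum_(j < k) `|1 - z ^+ j| ^+ 2 = 2 *+ k.
  under eq_bigr do rewrite sqr_norm_subr1 //.
  rewrite sumrB sumr_const card_ord big_split /= -(rmorph_sum Num.conj).
  by rewrite sum_expr_root1 // rmorph0 addr0 subr0.
have [j far_j] : exists j : 'I_k, 2 <= `|1 - z ^+ j| ^+ 2.
  apply/existsP; apply: contraT => /existsPn near.
  suff : \sum_(j < k) `|1 - z ^+ j| ^+ 2 < \sum_(j < k) 2.
    by rewrite sum_dist sumr_const card_ord ltxx.
  apply: ltr_sum => [|i _]; first by apply/hasP; exists (Ordinal k_gt0); rewrite ?mem_enum.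
  by rewrite real_ltNge ?near ?ger0_real ?exprn_ge0.
have far_sym : `|1 - z ^+ (k - j)| = `|1 - z ^+ j|.
  have -> : 1 - z ^+ (k - j) = - z ^+ (k - j) * (1 - z ^+ j).
    by rewrite mulrBr mulr1 mulNr opprK -exprD subnK ?zk 1?addrC // ltnW.
  by rewrite normrM normrN zX_norm mul1r.
case: (leqP (2 * j) k) => [le_jk | lt_kj]; first by exists j.
by exists (k - j)%N; rewrite ?far_sym //; lia.
Qed.

Lemma root1_dist_lb z k : (0 < k)%N -> z ^+ k = 1 -> z != 1 ->
  8 <= k%:R ^+ 2 * `|1 - z| ^+ 2.
Proof.
move=> k_gt0 zk z1; have [j le_jk far_j] := root1_far_power k_gt0 zk z1.
have z_norm := norm_root1 k_gt0 zk.
have near_j : `|1 - z ^+ j| ^+ 2 <= (j%:R * `|1 - z|) ^+ 2.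
  by rewrite lerXn2r ?nnegrE ?mulr_ge0 ?norm_subr1_expr_le.
have jk : (2 * j)%:R ^+ 2 <= k%:R ^+ 2 :> C by rewrite -!natrX ler_nat leq_exp2r.
apply: le_trans (ler_wpM2r (exprn_ge0 _ (normr_ge0 _)) jk).
rewrite natrM exprMn -mulrA -exprMn (_ : 8 = 2 ^+ 2 * 2); last by rewrite -natrX -natrM.
by rewrite ler_wpM2l ?exprn_ge0 ?ler0n // (le_trans far_j near_j).
Qed.

End RootsOfUnity.

Section Characters.
Variables (C : numClosedFieldType) (N : finZmodType).
Implicit Types (G : {group N}) (g h : N -> C) (x y : N).

Definition char_on (G : {set N}) g :=
  g 0 = 1 /\ {in G &, {morph g : a b / a + b >-> a * b}}.

Definition is_char g := g 0 = 1 /\ {morph g : a b / a + b >-> a * b}.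

Lemma char_onMn G g x k : char_on G g -> x \in G -> g (x *+ k) = g x ^+ k.
Proof.
move=> [g0 gD] xG; elim: k => [|k IHk]; first by rewrite mulr0n g0.
by rewrite mulrS gD ?groupX // IHk exprS.
Qed.

Lemma card_zmod_gt0 : (0 < #|N|)%N.
Proof. by apply/card_gt0P; exists 0. Qed.

Lemma mulrn_card x : x *+ #|N| = 0.
Proof. by have := expg_cardG (in_setT x); rewrite cardsT. Qed.

Lemma mulrn_period G y : exists2 d, (0 < d)%N & forall j, (y *+ j \in G) = (d %| j)%N.
Proof.
have ex : exists d, (0 < d)%N && (y *+ d \in G).
  by exists #|N|; rewrite mulrn_card group1 card_zmod_gt0.
case: (ex_minnP ex) => d /andP[d_gt0 yd] d_min; exists d => // j.
apply/idP/idP => [yj | /dvdnP[q ->]]; last by rewrite mulnC mulrnA; apply: groupX.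
have yr : y *+ (j %% d) \in G.
  have yq : y *+ (j %/ d * d) \in G by rewrite mulnC mulrnA; apply: groupX.
  by rewrite -(groupMl _ yq) zmodMgE -mulrnDr -divn_eq.
apply: contraT; rewrite /dvdn -lt0n => jd.
by have := d_min _ (introT andP (conj jd yr)); rewrite leqNgt ltn_mod d_gt0.
Qed.

Section Extension.
Variables (G : {group N}) (g : N -> C) (y : N) (d : nat) (t : C).
Hypotheses (gG : char_on G g) (d_gt0 : (0 < d)%N).
Hypotheses (yG : forall j, (y *+ j \in G) = (d %| j)%N) (tE : t ^+ d = g (y *+ d)).

Lemma char_on_mulrn j : y *+ j \in G -> g (y *+ j) = t ^+ j.
Proof.
rewrite yG => /dvdnP[q ->].
rewrite mulnC mulrnA exprM tE; apply: (char_onMn _ gG).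
by rewrite yG.
Qed.

(* 0 is a junk value: every z in G <*> <[y]> has a k < d with z - y *+ k in G. *)
Definition char_ext z :=
  if [pick k : 'I_d | z - y *+ k \in G] is Some k then g (z - y *+ k) * t ^+ k else 0.

Lemma char_ext_wd z j k : z - y *+ j \in G -> z - y *+ k \in G ->
  g (z - y *+ j) * t ^+ j = g (z - y *+ k) * t ^+ k.
Proof.
wlog le_kj : j k / (k <= j)%N.
  by move=> wlog_le zj zk; case/orP: (leq_total k j) => ?; [|symmetry]; apply: wlog_le.
move=> zj zk.
have zkE : z - y *+ k = (z - y *+ j) + y *+ (j - k).
  by rewrite -{1}(subnK le_kj) mulrnDr opprD addrA addrAC subrK.
have yjk : y *+ (j - k) \in G.
  by rewrite -(groupMl _ zj) zmodMgE -zkE.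
by rewrite zkE (gG.2 _ _ zj yjk) (char_on_mulrn yjk) -mulrA -exprD subnK.
Qed.

Lemma char_extE z k : z - y *+ k \in G -> char_ext z = g (z - y *+ k) * t ^+ k.
Proof.
move=> zk; rewrite /char_ext; case: pickP => [j zj | none]; first exact: char_ext_wd.
have zkd : z - y *+ (k %% d) \in G.
  have -> : z - y *+ (k %% d) = (z - y *+ k) + y *+ (k %/ d * d).
    by rewrite {2}(divn_eq k d) mulrnDr opprD addrA addrAC subrK.
  by rewrite groupM // yG dvdn_mull.
by have := none (Ordinal (ltn_pmod k d_gt0)); rewrite /= zkd.
Qed.

Lemma char_ext_on : char_on (G <*> <[y]>)%g char_ext.
Proof.
have joinE : (G <*> <[y]>)%g = (G * <[y]>)%g.
  by rewrite cent_joinEl // (sub_abelian_cent2 (zmod_abelian [set: N])) ?subsetT.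
rewrite joinE; split.
  by rewrite (char_extE (k := 0)) ?subr0 ?group1 // gG.1 mulr1.
move=> _ _ /mulsgP[a _ aG /cycleP[i ->] ->] /mulsgP[b _ bG /cycleP[j ->] ->].
rewrite !zmodMgE !zmodXgE.
have sumE : a + y *+ i + (b + y *+ j) - y *+ (i + j) = a + b.
  by rewrite mulrnDr addrACA addrK.
rewrite (char_extE (k := i + j)) ?sumE ?groupM //.
rewrite (char_extE (z := a + _) (k := i)) ?addrK //.
by rewrite (char_extE (z := b + _) (k := j)) ?addrK // gG.2 // exprD mulrACA.
Qed.

Lemma char_ext_gen : char_ext y = t.
Proof. by rewrite (char_extE (k := 1)) mulr1n subrr ?group1 // gG.1 mul1r. Qed.

Lemma char_ext_sub : {in G, char_ext =1 g}.
Proof. by move=> a aG; rewrite (char_extE (k := 0)) subr0 // mulr1. Qed.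

End Extension.

Lemma char_extend G g : char_on G g -> exists2 h, is_char h & {in G, h =1 g}.
Proof.
elim: {G}#|~: G|.+1 {-2}G (ltnSn #|~: G|) g => // m IH G sizeG g gG.
have [y yG | allG] := pickP [predC G]; last first.
  have Gx x : x \in G by apply: negbFE; exact: allG.
  by exists g => //; split=> [|a b]; [exact: gG.1 | exact: gG.2].
have [d d_gt0 yd] := mulrn_period G y.
have tE : d.-root (g (y *+ d)) ^+ d = g (y *+ d) by rewrite rootCK.
have Gy : (G \proper G <*> <[y]>)%g.
  apply/properP; split; first exact: joing_subl.
  by exists y => //; apply: (subsetP (joing_subr _ _)); apply: cycle_id.
have [|h hh hE] := IH (G <*> <[y]>)%G _ _ (char_ext_on gG d_gt0 yd tE).
  have ltG : ~: (G <*> <[y]>)%G \proper ~: G by rewrite properC.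
  by apply: leq_trans (proper_card ltG) _; rewrite -ltnS.
by exists h => // a aG; rewrite hE ?(subsetP (joing_subl _ _)) // char_ext_sub.
Qed.

Lemma char_separates x : x != 0 -> exists2 h, is_char h & h x != 1.
Proof.
move=> x0; have one_char : char_on 1%G (fun _ : N => 1 : C).
  by split=> // a b _ _; rewrite mulr1.
have [d d_gt0 xd] := mulrn_period 1%G x.
have d_gt1 : (1 < d)%N.
  rewrite ltn_neqAle eq_sym d_gt0 andbT; apply: contra x0 => /eqP d1.
  by have := xd 1; rewrite mulr1n d1 dvdnn inE => x1; exact: x1.
have [t td t1] := exists_root1_neq1 C d_gt1.
have ext := char_ext_on one_char d_gt0 xd (t := t) td.
have [h hh hE] := char_extend ext.
exists h => //; rewrite hE ?(char_ext_gen one_char d_gt0 xd) //.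
by rewrite (subsetP (joing_subr _ _)) ?cycle_id.
Qed.

Section CharacterTheory.
Variables (g : N -> C) (g_char : is_char g).

Lemma charD x y : g (x + y) = g x * g y.
Proof. exact: g_char.2. Qed.

Lemma char_sum I (r : seq I) (P : pred I) (f : I -> N) :
  g (\sum_(i <- r | P i) f i) = \prod_(i <- r | P i) g (f i).
Proof. exact: (big_morph g charD g_char.1). Qed.

Lemma charMn x k : g (x *+ k) = g x ^+ k.
Proof. by elim: k => [|k IHk]; rewrite ?mulr0n ?g_char.1 // mulrS charD IHk exprS. Qed.

Lemma char_root1 x : g x ^+ #|N| = 1.
Proof. by rewrite -charMn mulrn_card g_char.1. Qed.

Lemma char_neq0 x : g x != 0.
Proof.
apply/eqP => gx0; have := char_root1 x; rewrite gx0 expr0n gtn_eqF ?card_zmod_gt0 //.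
by move/eqP; rewrite eq_sym oner_eq0.
Qed.

Lemma charB x y : g (x - y) = g x / g y.
Proof.
apply: (mulIf (char_neq0 y)); rewrite -charD subrK mulfVK //; exact: char_neq0.
Qed.

Lemma char_eq1B x y : (g (x - y) == 1) = (g x == g y).
Proof.
rewrite charB; apply/eqP/eqP => [/divr1_eq // | ->].
exact/divff/char_neq0.
Qed.

Lemma norm_char x : `|g x| = 1.
Proof. exact: norm_root1 card_zmod_gt0 (char_root1 x). Qed.

Lemma char_exp k : is_char (fun x => g x ^+ k).
Proof. by split=> [|x y]; rewrite ?g_char.1 ?expr1n // charD exprMn. Qed.

Lemma char_exp_prime_order : (exists y, g y != 1) ->
  exists q, exists2 p, prime p & (exists y, g y ^+ q != 1) /\ forall y, g y ^+ (q * p) = 1.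
Proof.
move=> [y0 gy0].
have ex : exists m, (0 < m)%N && [forall y, g y ^+ m == 1].
  by exists #|N|; rewrite card_zmod_gt0; apply/forallP => y; rewrite char_root1.
case: (ex_minnP ex) => m /andP[m_gt0 /forallP gm] m_min.
have m_gt1 : (1 < m)%N.
  rewrite ltn_neqAle eq_sym m_gt0 andbT; apply: contra gy0 => /eqP m1.
  by have := gm y0; rewrite m1 expr1.
have p_prime := pdiv_prime m_gt1.
exists (m %/ pdiv m)%N; exists (pdiv m) => //.
rewrite divnK ?pdiv_dvd //; split=> [|y]; last exact/eqP/gm.
have q_gt0 : (0 < m %/ pdiv m)%N by rewrite divn_gt0 ?prime_gt0 // dvdn_leq ?pdiv_dvd.
have [all1 | /forallPn[y gy]] := boolP [forall y, g y ^+ (m %/ pdiv m)%N == 1].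
  have := m_min _ (introT andP (conj q_gt0 all1)).
  by rewrite leqNgt ltn_Pdiv ?prime_gt1.
by exists y.
Qed.

Lemma sum_char : \sum_x g x = (#|N| * [forall x, g x == 1])%:R.
Proof.
have [g1 | /forallPn[y gy]] := boolP [forall x, g x == 1].
  by rewrite muln1 -sumr_const; apply: eq_bigr => x _; apply/eqP/(forallP g1).
have : (1 - g y) * \sum_x g x = 0.
  rewrite mulrBl mul1r mulr_sumr {1}(reindex_inj (addrI y)) /=.
  by apply/eqP; rewrite subr_eq0; apply/eqP/eq_bigr => x _; rewrite charD.
by move/eqP; rewrite muln0 mulf_eq0 subr_eq0 eq_sym (negbTE gy) => /eqP.
Qed.

End CharacterTheory.

Definition fourier_family (J : finType) (chi : J -> N -> C) :=
  [/\ (0 < #|J|)%N, forall k, is_char (chi k)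
    & forall x, \sum_k chi k x = (#|J| * (x == 0))%:R].

(* The products \prod_y s_y ^+ k_y, with s_y separating y from 0: indexing by
   k : N -> 'I_#|N| avoids enumerating the dual group of N. *)
Lemma exists_fourier_family :
  exists chi : {ffun N -> 'I_#|N|} -> N -> C, fourier_family chi.
Proof.
have sep y : exists2 h : N -> C, is_char h & y != 0 -> h y != 1.
  have [->|y0] := eqVneq y 0; last by have [h] := char_separates y0; exists h.
  by exists (fun _ => 1) => //; split=> // a b; rewrite mulr1.
have [s s_char s_sep] := fin_all_exists2 sep.
exists (fun (k : {ffun N -> 'I_#|N|}) x => \prod_y s y x ^+ k y); split=> [|k|x].
- by rewrite card_ffun card_ord expn_gt0 card_zmod_gt0.
- split=> [|a b]; first by rewrite big1 // => y _; rewrite (s_char y).1 expr1n.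
  by rewrite -big_split; apply: eq_bigr => y _; rewrite charD // exprMn.
- rewrite /= -(bigA_distr_bigA (fun y (j : 'I_#|N|) => s y x ^+ j)) card_ffun card_ord.
  have [->|x0] := eqVneq x 0; last first.
    by rewrite muln0 (bigD1 x) //= sum_expr_root1 ?mul0r ?s_sep ?char_root1.
  rewrite muln1 natrX -prodr_const; apply: eq_big => // y _.
  by under eq_bigr do rewrite (s_char y).1 expr1n; rewrite sumr_const card_ord.
Qed.

Lemma fourier_family_card_trivial (J : finType) (chi : J -> N -> C) :
  fourier_family chi -> (#|[set k | [forall x, chi k x == 1%R]]| * #|N|)%N = #|J|.
Proof.
move=> [_ chi_char chi_sum]; apply/eqP; rewrite -(eqr_nat C) natrM.
set T := [set k | _].
have count_trivial : (\sum_k [forall x, chi k x == 1%R] = #|T|)%N.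
  rewrite -sum1_card [RHS]big_mkcond /=; apply: eq_bigr => k _.
  by rewrite inE; case: [forall x, _].
have sum_at0 : \sum_(x : N) (#|J| * (x == 0))%:R = #|J|%:R :> C.
  by rewrite (bigD1 (0 : N)) //= eqxx muln1 big1 ?addr0 // => x /negbTE->; rewrite muln0.
rewrite -sum_at0 -(eq_bigr _ (fun x _ => chi_sum x)) exchange_big /=.
under eq_bigr do rewrite sum_char //.
by rewrite -natr_sum -big_distrr /= count_trivial natrM mulrC.
Qed.

End Characters.

Section CharacterMean.
Variable C : numClosedFieldType.

Lemma sum_weighted_sqr_dist (I : finType) (a z : I -> C) :
  (forall i, (a i)^* = a i) -> \sum_i a i = 1 -> (forall i, `|z i| = 1) ->
  \sum_i \sum_j a i * a j * `|z i - z j| ^+ 2 = 2 - 2 * `|\sum_i a i * z i| ^+ 2.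
Proof.
move=> a_real a_sum z_norm.
have zz i : z i * (z i)^* = 1 by rewrite -normCK z_norm expr1n.
pose cross i j := a i * a j * (z i * (z j)^*).
have normS : `|\sum_i a i * z i| ^+ 2 = \sum_i \sum_j cross i j.
  rewrite normCK rmorph_sum mulr_suml; apply: eq_bigr => i _.
  by rewrite mulr_sumr; apply: eq_bigr => j _; rewrite rmorphM /= a_real /cross; ring.
have cross_sym : \sum_i \sum_j cross j i = \sum_i \sum_j cross i j by rewrite exchange_big.
have term i j : a i * a j * `|z i - z j| ^+ 2 = 2 * (a i * a j) - cross i j - cross j i.
  rewrite normCK rmorphB /cross.
  transitivity (a i * a j *
    (z i * (z i)^* + z j * (z j)^* - z i * (z j)^* - z j * (z i)^*)); first by ring.
  by rewrite !zz; ring.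
have a_sqr : \sum_i \sum_j a i * a j = 1.
  by under eq_bigr do rewrite -mulr_sumr a_sum mulr1.
under eq_bigr do under eq_bigr do rewrite term.
under eq_bigr do rewrite !sumrB -mulr_sumr.
by rewrite !sumrB -mulr_sumr a_sqr cross_sym normS; ring.
Qed.

Lemma char_mean_sqr_gap (G : finZmodType) (a psi : G -> C) (e : C) :
    (forall r, (a r)^* = a r) -> (forall r, 0 <= a r) -> \sum_r a r = 1 ->
    is_char psi -> (forall r, e <= 1 - \sum_(s | psi s == psi r) a s) ->
  8 / #|G|%:R ^+ 2 * e <= 2 - 2 * `|\sum_r a r * psi r| ^+ 2.
Proof.
move=> a_real a_ge0 a_sum psi_char fiber_le.
rewrite -sum_weighted_sqr_dist // => [|r]; last exact: norm_char.
have G_gt0 : 0 < #|G|%:R :> C by rewrite ltr0n card_zmod_gt0.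
have dist_lb r s : 8 / #|G|%:R ^+ 2 * (a r * a s * (psi s != psi r)%:R)
    <= a r * a s * `|psi r - psi s| ^+ 2.
  have [-> | neq_rs] := eqVneq (psi s) (psi r).
    by rewrite mulr0 mulr0 !mulr_ge0 ?exprn_ge0.
  rewrite mulr1 mulrC; apply: ler_wpM2l; first exact: mulr_ge0.
  have psi_rs : psi r - psi s = psi r * (1 - psi (s - r)).
    by rewrite (charB psi_char) mulrBr mulr1 mulrCA divff ?mulr1 // char_neq0.
  have psi_sr1 : psi (s - r) != 1 by rewrite char_eq1B.
  rewrite psi_rs normrM norm_char // mul1r ler_pdivrMr ?exprn_gt0 // mulrC.
  by rewrite root1_dist_lb ?card_zmod_gt0 ?char_root1.
apply: le_trans (ler_sum _ (fun r _ => ler_sum _ (fun s _ => dist_lb r s))).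
under eq_bigr do rewrite -mulr_sumr.
rewrite -mulr_sumr; apply: ler_wpM2l; first by rewrite divr_ge0 ?exprn_ge0 ?ler0n.
have mass_neq r : \sum_s a r * a s * (psi s != psi r)%:R
    = a r * (1 - \sum_(s | psi s == psi r) a s).
  rewrite -[X in _ * (X - _)]a_sum.
  rewrite [X in _ * (X - _)](bigID (fun s => psi s == psi r)) /= addrAC subrr add0r.
  rewrite mulr_sumr [RHS]big_mkcond; apply: eq_bigr => s _.
  by case: (psi s != psi r); rewrite ?mulr1 ?mulr0.
under eq_bigr do rewrite mass_neq.
have -> : e = \sum_r a r * e by rewrite -mulr_suml a_sum mul1r.
by apply: ler_sum => r _; apply: ler_wpM2l.
Qed.

End CharacterMean.

Section BalancedFibers.
Variables (K : realType) (R : finComNzRingType) (eps : K) (mu : R -> K).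
Variable C : numClosedFieldType.
Hypothesis mu_bal : balanced eps mu.

Lemma balanced_char_fiber_prime (chi : R -> C) p :
    is_char chi -> prime p -> (forall r, chi r ^+ p = 1) -> (exists r, chi r != 1) ->
  forall c, \sum_(r | chi r == chi c) mu r <= 1 - eps.
Proof.
move=> chi_char p_prime chi_p [r0 chi_r0] c.
(* I is the largest ideal inside W = ker chi, and p kills R/I; the fibre of chi
   over chi c is the proper coset c + W. *)
pose I := [set r | [forall s, chi (r * s) == 1]].
pose W := [set r | chi r == 1].
have I_ideal : set_ideal I.
  apply/and3P; split.
  - by rewrite inE; apply/forallP => s; rewrite mul0r chi_char.1.
  - apply/forallP => x; apply/implyP; rewrite inE => /forallP x1.
    apply/forallP => y; apply/implyP; rewrite inE => /forallP y1.
    by rewrite inE; apply/forallP => s; rewrite mulrBl char_eq1B // (eqP (y1 s)).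
  - apply/forallP => r; apply/forallP => x; apply/implyP; rewrite !inE => /forallP x1.
    by apply/forallP => s; rewrite -mulrA mulrCA x1.
have p_in_I : p%:R \in I.
  by rewrite inE; apply/forallP => s; rewrite mulr_natl (charMn chi_char) chi_p.
have I_sub_W : I \subset W.
  by apply/subsetP => r; rewrite !inE => /forallP/(_ 1); rewrite mulr1.
have W_proper : W != [set: R].
  by apply/negP => /eqP/setP/(_ r0); rewrite !inE (negbTE chi_r0).
have I_proper : I != [set: R].
  by apply: contraNneq W_proper => IT; rewrite eqEsubset subsetT -IT.
have W_subgroup : set_subgroup W.
  apply/andP; split; first by rewrite inE chi_char.1.
  apply/forallP => x; apply/implyP; rewrite inE => /eqP x1.
  by apply/forallP => y; apply/implyP; rewrite !inE char_eq1B // x1 => /eqP ->.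
have fiberE : \sum_(r | chi r == chi c) mu r = \sum_(r | r - c \in W) mu r.
  by apply: eq_bigl => r; rewrite inE char_eq1B.
rewrite fiberE.
exact: mu_bal I_ideal p_prime p_in_I I_proper W c W_subgroup I_sub_W W_proper.
Qed.

Lemma balanced_char_fiber (chi : R -> C) : (forall r, 0 <= mu r) ->
    is_char chi -> (exists r, chi r != 1) ->
  forall c, \sum_(r | chi r == chi c) mu r <= 1 - eps.
Proof.
move=> mu_ge0 chi_char nontriv c.
have [q [p p_prime [chiq_nontriv chiq_p]]] := char_exp_prime_order chi_char nontriv.
have chiq_p' r : (chi r ^+ q) ^+ p = 1 by rewrite -exprM.
have chiq_char := char_exp chi_char q.
apply: le_trans (balanced_char_fiber_prime chiq_char p_prime chiq_p' chiq_nontriv c).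
rewrite [X in _ <= X]big_mkcond [X in X <= _]big_mkcond; apply: ler_sum => r _.
by case: eqP => [-> | _]; rewrite ?eqxx //; case: ifP.
Qed.

End BalancedFibers.

Local Notation toC := (real_complex _).

Lemma complex_norm_le_of_gap (K : realType) (S : K[i]) (x : K) : 0 <= x ->
  toC (8 * x) <= 2 - 2 * `|S| ^+ 2 -> `|S| <= toC (1 - x).
Proof.
move=> x_ge0; have [k normS] : exists k, `|S| = toC k.
  by apply/complex_realP; exact: normr_real.
have k_ge0 : 0 <= k by rewrite -ler0c -normS.
have -> : 2 - 2 * `|S| ^+ 2 = toC (2 - 2 * k ^+ 2).
  by rewrite normS rmorphB rmorphM rmorphXn /= !rmorph_nat.
(* |S|^2 <= 1 - 4x <= (1 - x)^2 *)
by rewrite normS !lecR => gap; nra.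
Qed.

Lemma norm_real_complex (K : realType) (y : K) : `|toC y| = toC `|y|.
Proof.
have [y_ge0 | y_lt0] := lerP 0 y; first by rewrite !ger0_norm ?ler0c.
by rewrite !ltr0_norm ?ltcR // rmorphN.
Qed.

Lemma balanced_char_mean_le (K : realType) (R : finComNzRingType) (eps : K)
    (mu : R -> K) (psi : R -> K[i]) :
    0 <= eps -> is_distr mu -> balanced eps mu -> is_char psi -> (exists r, psi r != 1) ->
  `|\sum_r toC (mu r) * psi r| <= toC (1 - eps / #|R|%:R ^+ 2).
Proof.
move=> eps_ge0 [mu_ge0 mu_sum] mu_bal psi_char nontriv.
apply: complex_norm_le_of_gap; first by rewrite divr_ge0 ?exprn_ge0 ?ler0n.
have mu_sumC : \sum_r toC (mu r) = 1 by rewrite -rmorph_sum mu_sum.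
have fiber_le r : toC eps <= 1 - \sum_(s | psi s == psi r) toC (mu s).
  rewrite -rmorph_sum -[1]/(toC 1) -rmorphB lecR.
  by rewrite lerBrDr addrC -lerBrDr (balanced_char_fiber mu_bal).
have mu_real r : (toC (mu r))^* = toC (mu r) by apply/CrealP; rewrite ger0_real ?ler0c.
have mu_geC0 r : 0 <= toC (mu r) by rewrite ler0c.
apply: le_trans (char_mean_sqr_gap mu_real mu_geC0 mu_sumC psi_char fiber_le).
by rewrite rmorphM fmorph_div rmorphXn /= !rmorph_nat mulrA mulrAC.
Qed.

Section CodeProbability.
Variables (K : realType) (R : finComNzRingType) (N : finLmodType R) (n : nat).
Variables (F : {linear 'rV[R]_n -> N}) (mu : 'I_n -> R -> K).
Hypothesis mu_distr : forall i, is_distr (mu i).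
Implicit Types g : N -> K[i].

Definition char_mean (g : N -> K[i]) :=
  \sum_(x : 'rV[R]_n) g (F x) * \prod_i toC (mu i (x ord0 i)).

Lemma char_code_prod g x : is_char g -> g (F x) = \prod_i g (F (x ord0 i *: 'e_i)).
Proof. by move=> g_char; rewrite {1}(row_sum_delta x) raddf_sum char_sum. Qed.

Lemma char_coord g i : is_char g -> is_char (fun r : R => g (F (r *: 'e_i))).
Proof.
move=> g_char; split=> [|r s]; first by rewrite scale0r raddf0 g_char.1.
by rewrite scalerDl raddfD charD.
Qed.

Lemma char_mean_prod g : is_char g ->
  char_mean g = \prod_i \sum_r toC (mu i r) * g (F (r *: 'e_i)).
Proof.
move=> g_char; rewrite bigA_distr_bigA /char_mean.
pose row_of (phi : {ffun 'I_n -> R}) : 'rV[R]_n := \row_i phi i.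
have row_of_bij : bijective row_of.
  exists (fun x : 'rV[R]_n => [ffun i => x ord0 i]) => [phi | x].
    by apply/ffunP => i; rewrite ffunE mxE.
  by apply/rowP => i; rewrite mxE ffunE.
rewrite (reindex row_of) /=; last exact: onW_bij.
apply: eq_bigr => phi _; rewrite char_code_prod // -big_split /=.
by apply: eq_bigr => i _; rewrite !mxE mulrC.
Qed.

Lemma char_mean_trivial g : (forall y, g y = 1) -> char_mean g = 1.
Proof.
move=> g1; have g_char : is_char g by split=> [|a b]; rewrite !g1 ?mulr1.
rewrite char_mean_prod // big1 // => i _.
under eq_bigr do rewrite g1 mulr1.
by rewrite -rmorph_sum (mu_distr i).2.
Qed.

Lemma code_nontrivial_coords g (w : K) :
  is_code F w -> is_char g -> (exists y, g y != 1) ->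
  w <= #|[set i | [exists r, g (F (r *: 'e_i)) != 1]]|%:R.
Proof.
move=> F_code g_char [y gy]; rewrite leNgt; apply/negP => small.
have [x [x_sigma Fx]] := F_code _ small y.
move: gy; rewrite -Fx char_code_prod // big1 ?eqxx // => i _.
have [i_in | ] := boolP (i \in [set i | [exists r, g (F (r *: 'e_i)) != 1]]).
  by rewrite x_sigma // scale0r raddf0 g_char.1.
by rewrite inE => /existsPn/(_ (x ord0 i)); rewrite negbK => /eqP.
Qed.

Lemma char_mean_le g (eps w : K) : 0 <= eps -> (forall i, balanced eps (mu i)) ->
    is_code F w -> is_char g -> (exists y, g y != 1) ->
  `|char_mean g| <= toC (expR (- (eps * w / #|R|%:R ^+ 2))).
Proof.
move=> eps_ge0 mu_bal F_code g_char nontriv.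
have w_le := code_nontrivial_coords F_code g_char nontriv.
set sigma := [set i | _] in w_le.
pose c := eps / #|R|%:R ^+ 2.
have c_ge0 : 0 <= c by rewrite divr_ge0 ?exprn_ge0 ?ler0n.
rewrite char_mean_prod // normr_prod.
apply: (@le_trans _ _ (\prod_i (if i \in sigma then toC (expR (- c)) else 1))).
  apply: ler_prod => i _; rewrite normr_ge0 /=; case: ifP => [i_in | i_out].
    have coord_nontriv : exists r, g (F (r *: 'e_i)) != 1.
      by move: i_in; rewrite inE => /existsP.
    apply: le_trans (balanced_char_mean_le eps_ge0 (mu_distr i) (mu_bal i)
      (char_coord i g_char) coord_nontriv) _.
    by rewrite lecR; have := expR_ge1Dx (- c); rewrite addrC.
  have coord1 r : g (F (r *: 'e_i)) = 1.
    by apply/eqP; move: i_out; rewrite inE => /negbT/existsPn/(_ r); rewrite negbK.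
  under eq_bigr do rewrite coord1 mulr1.
  by rewrite -rmorph_sum (mu_distr i).2 normr1.
rewrite -big_mkcond prodr_const -rmorphXn lecR -expRM_natr ler_expR.
have -> : eps * w / #|R|%:R ^+ 2 = c * w by rewrite mulrAC.
by rewrite mulNr lerN2 ler_wpM2l.
Qed.

End CodeProbability.

Section CodeFourier.
Variables (K : realType) (R : finComNzRingType) (N : finLmodType R) (n : nat).
Variables (F : {linear 'rV[R]_n -> N}) (mu : 'I_n -> R -> K) (A : N).
Variables (J : finType) (chi : J -> N -> K[i]).
Hypothesis chi_fourier : fourier_family chi.

Lemma prob_code_fourier :
  toC (prob_code F mu A) = #|J|%:R^-1 * \sum_k chi k (- A) * char_mean F mu (chi k).
Proof.
have [J_gt0 chi_char chi_sum] := chi_fourier.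
have indicator y : (y == 0)%:R = #|J|%:R^-1 * \sum_k chi k y :> K[i].
  by rewrite chi_sum natrM mulrA mulVf ?mul1r // pnatr_eq0 -lt0n.
rewrite /prob_code rmorph_sum /= big_mkcond /= /char_mean.
under [X in _ = _ * X]eq_bigr => k _ do rewrite mulr_sumr.
rewrite exchange_big mulr_sumr; apply: eq_bigr => x _.
set P := \prod_i _.
have -> : \sum_k chi k (- A) * (chi k (F x) * P) = (\sum_k chi k (F x - A)) * P.
  rewrite mulr_suml; apply: eq_bigr => k _.
  by rewrite charD // mulrA [chi k (- A) * _]mulrC.
rewrite mulrA -indicator subr_eq0 rmorph_prod.
by case: eqP; rewrite ?mul1r ?mul0r.
Qed.

Lemma prob_code_uniform_dev (B : K) : 0 <= B -> (forall i, is_distr (mu i)) ->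
    (forall k, (exists y, chi k y != 1) -> `|char_mean F mu (chi k)| <= toC B) ->
  `|prob_code F mu A - #|N|%:R^-1| <= B.
Proof.
move=> B_ge0 mu_distr mean_le; have [J_gt0 chi_char _] := chi_fourier.
set T := [set k | [forall y, chi k y == 1%R]].
have card_T : (#|T| * #|N|)%N = #|J| := fourier_family_card_trivial chi_fourier.
have T_gt0 : (0 < #|T|)%N by move: J_gt0; rewrite -card_T muln_gt0 => /andP[].
have N_inv : #|N|%:R^-1 = #|J|%:R^-1 * #|T|%:R :> K[i].
  by rewrite -card_T natrM invfM mulrAC mulVf ?mul1r // pnatr_eq0 -lt0n.
have trivial_terms : \sum_(k in T) chi k (- A) * char_mean F mu (chi k) = #|T|%:R.
  rewrite -sumr_const; apply: eq_bigr => k; rewrite inE => /forallP k1.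
  by rewrite char_mean_trivial // => [|y]; [rewrite (eqP (k1 _)) mul1r | exact/eqP].
have devE : toC (prob_code F mu A - #|N|%:R^-1) =
    #|J|%:R^-1 * \sum_(k | k \notin T) chi k (- A) * char_mean F mu (chi k).
  rewrite rmorphB /= prob_code_fourier (bigID (mem T)) /= trivial_terms mulrDr.
  by rewrite fmorphV /= rmorph_nat N_inv addrAC subrr add0r.
rewrite -lecR -norm_real_complex devE normrM ger0_norm ?invr_ge0 ?ler0n //.
rewrite ler_pdivrMl ?ltr0n //.
apply: le_trans (ler_norm_sum _ _ _) _.
apply: (@le_trans _ _ (\sum_(k | k \notin T) toC B)).
  apply: ler_sum => k; rewrite inE => /forallPn[y /negP chi_y].
  by rewrite normrM norm_char // mul1r mean_le //; exists y; apply/negP.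
rewrite sumr_const -[X in X <= _]mulr_natl; apply: ler_wpM2r; first by rewrite ler0c.
by rewrite ler_nat max_card.
Qed.

End CodeFourier.

Theorem lemma2p4
  (T : countIdomainType)
  (hT : dedekind_domain T)
  (hfin : forall J : T -> Prop, is_ideal J -> (exists x, J x /\ x != 0) ->
            finite_quotient J)
  (a : T) (ha0 : a != 0) (hau : a \isn't a GRing.unit)
  (R : finComNzRingType) (phi : {rmorphism T -> R})
  (phi_surj : forall r : R, exists t, phi t = r)
  (phi_ker : forall t, phi t = 0 <-> exists u, t = a * u)
  (N : finLmodType R)
  (K : realType) (delta eps : K) (hdelta : 0 < delta) (heps : 0 < eps)
  (n : nat) (hn : (0 < n)%N)
  (mu : 'I_n -> R -> K)
  (hmu : forall i, is_distr (mu i))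
  (hbal : forall i, balanced eps (mu i))
  (F : {linear 'rV[R]_n -> N})
  (hF : is_code F (delta * n%:R))
  (A : N) :
  `| prob_code F mu A - (#|N|%:R)^-1 |
    <= expR (- (eps * delta * n%:R / (#|R|%:R ^+ 2))).
Proof.
have [chi chi_fourier] := exists_fourier_family K[i] N.
apply: (prob_code_uniform_dev A chi_fourier); [exact: expR_ge0 | exact: hmu |].
move=> k nontriv; have [_ chi_char _] := chi_fourier.
by rewrite -(mulrA eps); exact: (char_mean_le hmu (ltW heps) hbal hF (chi_char k) nontriv).
Qed.
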